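(* Let $\psi$ be admissible, let $Q$ be a $\partial_\psi$-delta operator with $\partial_\psi$-basic polynomial sequence $(p_n)_{n\ge0}$, and let $S\in\Sigma_\psi$ be invertible with $Q=\partial_\psi S$. Then for every $n>0$: (1) $p_n(x)=Q'\,S^{-n-1}x^n$; (2) $p_n(x)=S^{-n}x^n-\frac{n_\psi}{n}\,(S^{-n})'\,x^{n-1}$; (3) $p_n(x)=\frac{n_\psi}{n}\,\hat x_\psi\, S^{-n}x^{n-1}$; (4) $Q'$ is invertible and $p_n(x)=\frac{n_\psi}{n}\,\hat x_\psi\,(Q')^{-1}p_{n-1}(x)$ (the $\psi$-Rodrigues formula).
   Context: $\mathbf F$ is a field of characteristic zero and $P=\mathbf F[x]$; $\mathrm{End}(P)$ is the algebra of linear operators on $P$. An admissible sequence is $\psi=(\psi_n)_{n\ge0}$ with $\psi_n\in\mathbf F$, $\psi_0=1$, $\psi_n\neq0$; $n_\psi=\psi_{n-1}/\psi_n$ ($n\ge1$), $0_\psi=0$, $n_\psi!=n_\psi(n-1)_\psi\cdots1_\psi$, $0_\psi!=1$. The $\psi$-derivative is $\partial_\psi x^n=n_\psi x^{n-1}$. For $y\in\mathbf F$, $E^y(\partial_\psi)=\sum_{k\ge0}\frac{y^k}{k_\psi!}\partial_\psi^{\,k}$. $\Sigma_\psi=\{T\in\mathrm{End}(P):[T,E^\alpha(\partial_\psi)]=0\ \forall\alpha\in\mathbf F\}$. A $\partial_\psi$-delta operator is $Q\in\Sigma_\psi$ with $Q(x)$ a nonzero constant. Its $\partial_\psi$-basic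 polynomial sequence is the sequence $(p_n)_{n\ge0}$ with $\deg p_n=n$, $p_0=1$, $p_n(0)=0$ for $n>0$, and $Qp_n=n_\psi p_{n-1}$. The operator $\hat x_\psi$ is the linear map on $P$ with $\hat x_\psi x^n=\frac{n+1}{(n+1)_\psi}x^{n+1}$ ($n\ge0$). The Pincherle $\psi$-derivative of $T\in\Sigma_\psi$ is $T'=T\hat x_\psi-\hat x_\psi T$. *)

From HB Require Import structures.
From mathcomp Require Import all_boot all_order all_algebra.
Set Implicit Arguments. Unset Strict Implicit. Unset Printing Implicit Defensive.
Import Order.TTheory GRing.Theory Num.Theory.
Local Open Scope ring_scope.

Section PsiCalculus.
Variable F : fieldType.

(* Elements of End(P), P = F[x]: linear maps {poly F} -> {poly F}. *)
Definition linop := {poly F} -> {poly F}.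

Definition admissible (psi : nat -> F) : Prop :=
  psi 0%N = 1 /\ forall n, psi n != 0.

Definition npsi (psi : nat -> F) (n : nat) : F :=
  if n is m.+1 then psi m / psi n else 0.

Fixpoint fact_psi (psi : nat -> F) (n : nat) : F :=
  if n is m.+1 then npsi psi n * fact_psi psi m else 1.

(* psi-derivative: x^n |-> n_psi x^(n-1) *)
Definition dpsi (psi : nat -> F) : linop := fun p =>
  \poly_(i < (size p).-1) (p`_i.+1 * npsi psi i.+1).

(* E^y(d_psi) = sum_k y^k / k_psi! d_psi^k (finite on each polynomial,
   since d_psi^k p = 0 for k >= size p) *)
Definition Epsi (psi : nat -> F) (y : F) : linop := fun p =>
  \sum_(k < size p) ((y ^+ k / fact_psi psi k) *: iter k (dpsi psi) p).

Definition Sigma_psi (psi : nat -> F) (T : linop) : Prop :=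
  linear T /\ forall (a : F) (p : {poly F}), T (Epsi psi a p) = Epsi psi a (T p).

Definition delta_op (psi : nat -> F) (Q : linop) : Prop :=
  Sigma_psi psi Q /\ exists c : F, c != 0 /\ Q 'X = c%:P.

(* d_psi-basic polynomial sequence of Q (with 0_psi = 0 the n = 0 case
   reads Q p_0 = 0) *)
Definition basic_seq (psi : nat -> F) (Q : linop) (p : nat -> {poly F}) : Prop :=
  [/\ forall n, size (p n) = n.+1,
      p 0%N = 1,
      forall n, (0 < n)%N -> (p n).[0] = 0
    & forall n, Q (p n) = npsi psi n *: p n.-1].

(* x-hat_psi : x^n |-> (n+1)/(n+1)_psi x^(n+1) *)
Definition xhat (psi : nat -> F) : linop := fun p =>
  \poly_(i < (size p).+1)
     (if i is j.+1 then p`_j * (j.+1)%:R / npsi psi j.+1 else 0).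

Definition pincherle (psi : nat -> F) (T : linop) : linop := fun p =>
  T (xhat psi p) - xhat psi (T p).

End PsiCalculus.

(* Write D for the psi-derivative, xhat for the psi-multiplication operator and
   T' = T xhat - xhat T for the Pincherle derivative.  The proof runs as
   follows.
   - psi-calculus: D xhat - xhat D = id (Heisenberg relation), xhat D x^n =
     n x^n, and Taylor's formula (E^a(D) r)(0) = r(a).
   - Expansion theorem (characteristic zero): every T in Sigma_psi is a formal
     power series in D, hence commutes with every linear operator commuting
     with D; in particular S, S^-1, Q, Q' all commute with each other and D.
   - The polynomials t_n := Q' S^-(n+1) x^n satisfy t_0 = 1, t_n(0) = 0 and
     Q t_(n+1) = (n+1)_psi t_n.  As Q is injective on polynomials vanishing at
     0, they ARE the basic sequence: this is part (1).  Using Q' = S + D S'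
     and (S^-n)' = -n S' S^-(n+1) one computes n t_n = xhat D S^-n x^n, which
     gives (3), and (2) is (3) with the Pincherle derivative expanded.
   - Q' = c0 + W with c0 = Q'(1) a nonzero constant and W degree-lowering, so
     Q' is inverted by a Neumann series; (4) then follows from (1) and (3). *)

From HB Require Import structures.
From mathcomp Require Import all_boot all_order all_algebra ring.
Set Implicit Arguments. Unset Strict Implicit. Unset Printing Implicit Defensive.
Import Order.TTheory GRing.Theory Num.Theory.
Local Open Scope ring_scope.

Section LinearMaps.
Variables (R : pzRingType) (U V : lmodType R) (f : U -> V).
Hypothesis f_lin : linear f.

Lemma lin0 : f 0 = 0.
Proof.
have := f_lin 1 0 0; rewrite scale1r !addr0 scale1r => e.
by apply: (@addrI _ (f 0)); rewrite addr0 -e.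
Qed.

Lemma linZ a u : f (a *: u) = a *: f u.
Proof. by rewrite -[a *: u]addr0 f_lin lin0 addr0. Qed.

Lemma linD u v : f (u + v) = f u + f v.
Proof. by rewrite -[u in LHS]scale1r f_lin scale1r. Qed.

Lemma linN u : f (- u) = - f u.
Proof. by rewrite -scaleN1r linZ scaleN1r. Qed.

Lemma linB u v : f (u - v) = f u - f v.
Proof. by rewrite linD linN. Qed.

Lemma lin_sum n (b : nat -> R) (w : nat -> U) :
  f (\sum_(i < n) b i *: w i) = \sum_(i < n) b i *: f (w i).
Proof.
elim: n => [|n IH]; first by rewrite !big_ord0 lin0.
by rewrite !big_ord_recr /= linD linZ IH.
Qed.

End LinearMaps.

Section NeumannSeries.
Variables (F : fieldType) (W : {poly F} -> {poly F}) (c : F).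
Hypotheses (W_lin : linear W) (c_neq0 : c != 0).
Hypothesis size_W : forall q, (size (W q) <= (size q).-1)%N.

Definition neumann_op (q : {poly F}) := c *: q + W q.

Definition neumann_inv (q : {poly F}) :=
  c^-1 *: \sum_(k < size q) (- c^-1) ^+ k *: iter k W q.

Lemma iterW_vanish k (q : {poly F}) : (size q <= k)%N -> iter k W q = 0.
Proof.
have size_iterW : (size (iter k W q) <= size q - k)%N.
  elim: k => [|k IH]; first by rewrite subn0.
  by apply: leq_trans (size_W _) _; rewrite subnS -!subn1 leq_sub2r.
move=> le_qk; apply/eqP; rewrite -size_poly_eq0 -leqn0.
by apply: leq_trans size_iterW _; rewrite leqn0 subn_eq0.
Qed.

(* Applying c + W to the series telescopes. *)
Lemma neumann_invK : cancel neumann_inv neumann_op.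
Proof.
move=> q; pose u k := (- c^-1) ^+ k *: iter k W q.
rewrite /neumann_op /neumann_inv (linZ W_lin) (lin_sum W_lin).
rewrite scalerA mulfV // scale1r scaler_sumr -big_split /=.
have -> : \sum_(i < size q) ((- c^-1) ^+ i *: iter i W q
                            + c^-1 *: ((- c^-1) ^+ i *: W (iter i W q)))
          = \sum_(i < size q) - (u i.+1 - u i).
  apply: eq_bigr => i _; rewrite /u opprB exprSr mulrN scaleNr opprK.
  by rewrite !scalerA [c^-1 * _]mulrC.
rewrite sumrN -(big_mkord xpredT (fun i => u i.+1 - u i)) telescope_sumr //.
by rewrite /u iterW_vanish // scaler0 expr0 scale1r sub0r opprK.
Qed.

(* c + W is injective: W r has smaller degree than c r unless r = 0. *)
Lemma neumann_op_inj : injective neumann_op.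
Proof.
move=> u v e; apply/eqP; rewrite -subr_eq0 -size_poly_eq0; apply/eqP.
set r := u - v.
have Wr : W r = - (c *: r).
  apply/eqP; rewrite -addr_eq0 addrC; apply/eqP.
  by rewrite /r (linB W_lin) scalerBr addrACA -/(neumann_op u) e -opprD subrr.
have := size_W r; rewrite Wr size_polyN size_scale //.
by case: (size r) => // n; rewrite ltnn.
Qed.

Lemma neumann_opK : cancel neumann_op neumann_inv.
Proof. by move=> q; apply: neumann_op_inj; rewrite neumann_invK. Qed.

End NeumannSeries.

Section PsiCalculus.
Variables (F : fieldType) (psi : nat -> F).
Hypothesis psi_adm : admissible psi.

Local Notation D := (dpsi psi).
Local Notation Xh := (xhat psi).
Local Notation P := (pincherle psi).
Local Notation fct := (fact_psi psi).
Implicit Types (q r : {poly F}).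

Lemma npsi_neq0 n : (0 < n)%N -> npsi psi n != 0.
Proof. by case: psi_adm => _ psi_neq0; case: n => // n _; rewrite mulf_neq0 ?invr_eq0. Qed.

Lemma fact_psi_neq0 n : fct n != 0.
Proof. by elim: n => [|n IH]; rewrite ?oner_neq0 // mulf_neq0 ?npsi_neq0. Qed.

Lemma coef_dpsi q i : (D q)`_i = q`_i.+1 * npsi psi i.+1.
Proof.
rewrite /dpsi coef_poly; case: ltnP => // le_qi.
by rewrite nth_default ?mul0r //; move: le_qi; case: (size q).
Qed.

Lemma coef_xhat q i :
  (Xh q)`_i = if i is j.+1 then q`_j * j.+1%:R / npsi psi j.+1 else 0.
Proof.
rewrite /xhat coef_poly; case: ltnP => //; case: i => // j le_qj.
by rewrite nth_default ?mul0r.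
Qed.

Lemma dpsi_linear : linear D.
Proof.
by move=> a u v; apply/polyP => i; rewrite coef_dpsi !coefD !coefZ !coef_dpsi mulrDl mulrA.
Qed.

Lemma xhat_linear : linear Xh.
Proof.
move=> a u v; apply/polyP => i; rewrite coef_xhat !coefD !coefZ !coef_xhat.
by case: i => [|j]; rewrite ?mulr0 ?addr0 // coefD coefZ !mulrDl !mulrA.
Qed.

Lemma horner_xhat0 q : (Xh q).[0] = 0.
Proof. by rewrite horner_coef0 coef_xhat. Qed.

Lemma size_dpsi q : size (D q) = (size q).-1.
Proof.
rewrite /dpsi; case Eq: (size q) => [|[|m]]; try by apply/eqP; rewrite -leqn0 size_poly.
apply: size_poly_eq; apply: mulf_neq0; last exact: npsi_neq0.
have : q != 0 by rewrite -size_poly_eq0 Eq.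
by rewrite -lead_coef_eq0 lead_coefE Eq.
Qed.

Lemma size_iter_dpsi k q : size (iter k D q) = (size q - k)%N.
Proof. by elim: k => [|k IH]; rewrite ?subn0 // iterS size_dpsi IH subnS. Qed.

Lemma iter_dpsi_vanish k q : (size q <= k)%N -> iter k D q = 0.
Proof. by move=> le_qk; apply/eqP; rewrite -size_poly_eq0 size_iter_dpsi subn_eq0. Qed.

Lemma dpsi_const q : (size q <= 1)%N -> D q = 0.
Proof. by move=> le_q1; have := iter_dpsi_vanish le_q1. Qed.

Lemma coef_iter_dpsi k q m : (iter k D q)`_m = q`_(m + k) * fct (m + k) / fct m.
Proof.
elim: k m => [|k IH] m; first by rewrite addn0 mulfK ?fact_psi_neq0.
rewrite iterS coef_dpsi IH addSnnS -[fct m.+1]/(npsi psi m.+1 * fct m).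
by field; rewrite fact_psi_neq0 npsi_neq0.
Qed.

Lemma dpsi_xhat r : D (Xh r) = r + Xh (D r).
Proof.
apply/polyP => i; rewrite coefD coef_dpsi !coef_xhat divfK ?npsi_neq0 //.
case: i => [|j]; first by rewrite addr0 mulr1.
rewrite coef_dpsi mulrAC mulfK ?npsi_neq0 //.
by rewrite -[j.+2]addn1 natrD mulrDr mulr1 addrC.
Qed.

Lemma dpsiXn n : D 'X^n = npsi psi n *: 'X^(n.-1).
Proof.
apply/polyP => i; rewrite coef_dpsi coefZ !coefXn.
case: n => [|n]; first by rewrite !mul0r.
by rewrite eqSS; case: eqP => [->|]; rewrite ?mulr1 ?mul1r ?mul0r ?mulr0.
Qed.

Lemma xhatXn n : Xh 'X^n = (n.+1%:R / npsi psi n.+1) *: 'X^(n.+1).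
Proof.
apply/polyP => i; rewrite coef_xhat coefZ.
case: i => [|j]; first by rewrite coefXn mulr0.
by rewrite !coefXn eqSS; case: eqP => [->|]; rewrite ?mulr1 ?mul1r ?mul0r ?mulr0.
Qed.

Lemma xhat_dpsiXn n : Xh (D 'X^n) = n%:R *: 'X^n.
Proof.
rewrite dpsiXn (linZ xhat_linear); case: n => [|n]; first by rewrite !scale0r.
by rewrite xhatXn scalerA mulrC divfK ?npsi_neq0.
Qed.

Lemma horner_Epsi0 a r : (Epsi psi a r).[0] = r.[a].
Proof.
rewrite /Epsi horner_coef0 coef_sum horner_coef; apply: eq_bigr => k _.
by rewrite coefZ coef_iter_dpsi add0n /= divr1 mulrCA divfK ?fact_psi_neq0.
Qed.

Lemma Epsi_expansion a q :
  Epsi psi a q = \sum_(j < size q) ((iter j D q).[a] / fct j) *: 'X^j.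
Proof.
apply/polyP => m; rewrite /Epsi coef_sumMXn coef_sum.
rewrite (big_ord1_cond_eq _ (fun j => (iter j D q).[a] / fct j) predT) andbT.
case: ltnP => lt_mq; last first.
  apply: big1 => k _; rewrite coefZ coef_iter_dpsi nth_default ?mul0r ?mulr0 //.
  exact: leq_trans lt_mq (leq_addr _ _).
rewrite (horner_coef_wide _ (n := size q)); last by rewrite size_iter_dpsi leq_subr.
rewrite mulr_suml; apply: eq_bigr => k _; rewrite coefZ !coef_iter_dpsi addnC.
by field; rewrite !fact_psi_neq0.
Qed.

Definition commD (U : {poly F} -> {poly F}) := linear U /\ forall q, U (D q) = D (U q).

Lemma commD_dpsi : commD D.
Proof. by split; [exact: dpsi_linear|]. Qed.

Lemma commD_comp U V : commD U -> commD V -> commD (fun q => U (V q)).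
Proof. by move=> [lU dU] [lV dV]; split=> [a u v|q]; rewrite ?lV ?lU // dV dU. Qed.

Lemma commD_iter U k : commD U -> commD (iter k U).
Proof. by move=> cU; elim: k => [|k IH]; [split | exact: commD_comp]. Qed.

Lemma commD_iter_dpsi U k q : commD U -> U (iter k D q) = iter k D (U q).
Proof. by case=> _ dU; elim: k => [|k IH] //=; rewrite dU IH. Qed.

Lemma commD_size_le U k q :
  commD U -> U (iter k D q) = 0 -> (size (U q) <= k)%N.
Proof.
move=> cU; rewrite commD_iter_dpsi // => /eqP.
by rewrite -size_poly_eq0 size_iter_dpsi subn_eq0.
Qed.

Lemma commD_size U q : commD U -> (size (U q) <= size q)%N.
Proof. by move=> cU; apply: commD_size_le; rewrite ?iter_dpsi_vanish ?(lin0 cU.1). Qed.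

(* The Pincherle derivative preserves commutation with D, by the Heisenberg
   relation. *)
Lemma commD_pincherle U : commD U -> commD (P U).
Proof.
move=> [lU dU]; split=> [a u v|q].
  by rewrite /pincherle xhat_linear lU lU xhat_linear opprD addrACA scalerBr.
rewrite /pincherle (linB dpsi_linear) -dU !dpsi_xhat dU (linD lU).
by rewrite opprD addrA [U q + _]addrC addrK.
Qed.

Lemma commD_sub_scale U c : commD U -> commD (fun q => U q - c *: q).
Proof.
move=> [lU dU]; split=> [a u v|q].
  by rewrite lU scalerDr scalerA mulrC -scalerA opprD addrACA scalerBr.
by rewrite dU (linB dpsi_linear) (linZ dpsi_linear).
Qed.

Lemma pincherle_comp A B r :
  linear A -> P (fun q => A (B q)) r = A (P B r) + P A (B r).
Proof. by move=> lA; rewrite /pincherle (linB lA) addrA subrK. Qed.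

End PsiCalculus.

Section ExpansionTheorem.
Variables (F : fieldType) (psi : nat -> F).
Hypotheses (psi_adm : admissible psi) (charF0 : [pchar F] =i pred0).

Local Notation D := (dpsi psi).
Local Notation fct := (fact_psi psi).
Implicit Types (q r : {poly F}) (T U : {poly F} -> {poly F}).

Lemma natr_inj_char0 : injective (fun n : nat => n%:R : F).
Proof.
move=> i j /= eij; wlog le_ij : i j eij / (i <= j)%N.
  by move=> hw; case: (leqP i j) => [|/ltnW] le; [exact: hw | exact/esym/hw].
apply/eqP; rewrite eqn_leq le_ij /= -subn_eq0 -(pcharf0P F).1 //.
by rewrite natrB // eij subrr.
Qed.

Lemma poly_eq0_everywhere r : (forall a, r.[a] = 0) -> r = 0.
Proof.
move=> r0; apply/eqP; apply: contraT => nz_r.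
pose rs := [seq (i%:R : F) | i <- iota 0 (size r)].
have rs_roots : all (root r) rs by apply/allP => x _; rewrite /root r0.
have rs_uniq : uniq rs by rewrite map_inj_uniq ?iota_uniq //; exact: natr_inj_char0.
by have := max_poly_roots nz_r rs_roots rs_uniq; rewrite size_map size_iota ltnn.
Qed.

(* The expansion is checked pointwise: by Taylor's formula both sides take
   the value  (T E^a(D) q)(0)  at every a. *)
Lemma sigma_expansion T q : Sigma_psi psi T ->
  T q = \sum_(j < size q) ((T 'X^j).[0] / fct j) *: iter j D q.
Proof.
move=> [lT TE]; apply/eqP; rewrite -subr_eq0; apply/eqP.
apply: poly_eq0_everywhere => a; apply/eqP; rewrite hornerD hornerN subr_eq0.
rewrite -(horner_Epsi0 psi_adm) -TE (Epsi_expansion psi_adm).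
rewrite (lin_sum lT _ (fun j => (iter j D q).[a] / fct j) (fun j => 'X^j)) !horner_sum.
by apply/eqP/eq_bigr => j _; rewrite !hornerZ mulrAC [RHS]mulrAC [_ * (T _).[0]]mulrC.
Qed.

(* Both sides expand into  \sum_j c_j U (D^j q), since U commutes with D. *)
Lemma sigma_commute T U q : Sigma_psi psi T -> commD psi U -> T (U q) = U (T q).
Proof.
move=> sT cU; pose c j := (T 'X^j).[0] / fct j.
have widen r N : (size r <= N)%N ->
    \sum_(j < size r) c j *: iter j D r = \sum_(j < N) c j *: iter j D r.
  move=> le_rN; rewrite (big_ord_widen N (fun j => c j *: iter j D r) le_rN).
  rewrite big_mkcond /=; apply: eq_bigr => j _.
  by case: ltnP => // le_rj; rewrite (iter_dpsi_vanish psi_adm) // scaler0.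
rewrite !(sigma_expansion _ sT) (widen _ _ (commD_size psi_adm _ cU)).
rewrite (lin_sum cU.1 _ c (fun j => iter j D q)).
by apply: eq_bigr => j _; rewrite (commD_iter_dpsi _ _ cU).
Qed.

Lemma sigma_commD T : Sigma_psi psi T -> commD psi T.
Proof. by move=> sT; split=> [|q]; [exact: sT.1 | exact: sigma_commute (commD_dpsi _)]. Qed.

End ExpansionTheorem.

Section DeltaOperator.
Variables (F : fieldType) (psi : nat -> F).
Hypotheses (psi_adm : admissible psi) (charF0 : [pchar F] =i pred0).
Variables (S Sinv Q : {poly F} -> {poly F}).
Hypotheses (S_sigma : Sigma_psi psi S) (SK : cancel S Sinv) (KS : cancel Sinv S).
Hypothesis QE : forall q, Q q = dpsi psi (S q).

Local Notation D := (dpsi psi).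
Local Notation Xh := (xhat psi).
Local Notation P := (pincherle psi).
Implicit Types (q r : {poly F}) (U : {poly F} -> {poly F}).

Lemma natr_neq0 n : (0 < n)%N -> (n%:R : F) != 0.
Proof. by move=> n_gt0; rewrite (pcharf0P F).1 // -lt0n. Qed.

Lemma commD_S : commD psi S.
Proof. exact: sigma_commD. Qed.

Lemma commD_Sinv : commD psi Sinv.
Proof.
have [lS dS] := commD_S; split=> [a u v|q]; apply: (can_inj SK).
  by rewrite KS lS !KS.
by rewrite KS dS KS.
Qed.

Lemma commD_iter_Sinv n : commD psi (iter n Sinv).
Proof. exact/commD_iter/commD_Sinv. Qed.

(* S^-1 commutes with every D-commuting operator, as S does. *)
Lemma Sinv_commute U q : commD psi U -> Sinv (U q) = U (Sinv q).
Proof.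
move=> cU; apply: (can_inj SK).
by rewrite KS (sigma_commute psi_adm charF0 _ S_sigma cU) KS.
Qed.

Lemma commD_Q : commD psi Q.
Proof.
have [lDS dDS] := commD_comp (commD_dpsi psi) commD_S.
by split=> [a u v|q]; rewrite !QE; [exact: lDS | exact: dDS].
Qed.

(* Q' = (D S)' = S + D S', since D' is the identity. *)
Lemma pincherle_Q r : P Q r = S r + D (P S r).
Proof.
rewrite /pincherle !QE (linB (dpsi_linear psi)) dpsi_xhat //.
by rewrite opprD addrCA addNKr.
Qed.

Lemma pincherle_iter_Sinv n r :
  P (iter n Sinv) r = - (n%:R *: P S (iter n.+1 Sinv r)).
Proof.
elim: n r => [|n IH] r; first by rewrite /pincherle subrr scale0r oppr0.
rewrite [P _ r](pincherle_comp _ _ _ commD_Sinv.1) IH.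
have -> : P Sinv (iter n Sinv r) = - Sinv (P S (iter n.+1 Sinv r)).
  by rewrite /pincherle (linB commD_Sinv.1) SK -[iter n.+1 _ _]/(Sinv _) KS opprB.
rewrite (linN commD_Sinv.1) (linZ commD_Sinv.1).
rewrite !(Sinv_commute _ (commD_pincherle psi_adm commD_S)).
by rewrite -opprD -[in RHS](addn1 n) natrD scalerDl scale1r addn1.
Qed.

(* Part (1) of the theorem, taken as a definition: p_n = Q' S^-(n+1) x^n. *)
Definition transfer n := P Q (iter n.+1 Sinv 'X^n).

Lemma transfer_xhat n : (0 < n)%N ->
  transfer n = n%:R^-1 *: Xh (D (iter n Sinv 'X^n)).
Proof.
move=> n_gt0; set Y := iter n Sinv 'X^n; have [lSn dSn] := commD_iter_Sinv n.
have S'_Y : P S (Sinv Y) = - (n%:R^-1 *: P (iter n Sinv) 'X^n).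
  by rewrite pincherle_iter_Sinv scalerN opprK scalerA mulVf ?natr_neq0 // scale1r.
have D_Sn' : D (P (iter n Sinv) 'X^n) = n%:R *: Y - Xh (D Y).
  rewrite /pincherle (linB (dpsi_linear psi)) -dSn !dpsi_xhat //.
  rewrite xhat_dpsiXn // (linD lSn) (linZ lSn) -/Y.
  by rewrite opprD addrACA subrr add0r.
rewrite /transfer -[iter n.+1 _ _]/(Sinv Y) pincherle_Q KS S'_Y.
rewrite (linN (dpsi_linear psi)) (linZ (dpsi_linear psi)) D_Sn'.
by rewrite scalerBr scalerA mulVf ?natr_neq0 // scale1r opprB addrCA subrr addr0.
Qed.

Lemma transfer_xhat_Sinv n : (0 < n)%N ->
  transfer n = (npsi psi n / n%:R) *: Xh (iter n Sinv 'X^(n.-1)).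
Proof.
move=> n_gt0; have [lSn dSn] := commD_iter_Sinv n.
rewrite transfer_xhat // -dSn dpsiXn (linZ lSn) (linZ (xhat_linear psi)).
by rewrite scalerA mulrC.
Qed.

(* Part (2) follows from (3) by expanding the Pincherle derivative. *)
Lemma Sinv_pincherle_form n : (0 < n)%N ->
  iter n Sinv 'X^n - (npsi psi n / n%:R) *: P (iter n Sinv) 'X^(n.-1)
  = (npsi psi n / n%:R) *: Xh (iter n Sinv 'X^(n.-1)).
Proof.
move=> n_gt0; have [lSn _] := commD_iter_Sinv n.
rewrite /pincherle xhatXn (prednK n_gt0) (linZ lSn) scalerBr scalerA.
have -> : npsi psi n / n%:R * (n%:R / npsi psi n) = 1.
  by field; rewrite natr_neq0 ?npsi_neq0.
by rewrite scale1r opprB addrC subrK.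
Qed.

Lemma commD_pincherle_Q : commD psi (P Q).
Proof. exact: commD_pincherle commD_Q. Qed.

(* The transfer polynomials satisfy the defining relations of the basic
   sequence of Q ... *)
Lemma Q_transfer n : Q (transfer n.+1) = npsi psi n.+1 *: transfer n.
Proof.
have [lPQ dPQ] := commD_pincherle_Q; have [lSn dSn] := commD_iter_Sinv n.+1.
rewrite /transfer [iter n.+2 _ _]/= QE.
rewrite (sigma_commute psi_adm charF0 _ S_sigma commD_pincherle_Q) KS -dPQ -dSn.
by rewrite dpsiXn (linZ lSn) (linZ lPQ).
Qed.

Lemma transfer0 : transfer 0 = 1.
Proof.
rewrite /transfer expr0 [iter 1 _ _]/= pincherle_Q KS dpsi_const ?addr0 //.
apply: leq_trans (commD_size psi_adm _ (commD_pincherle psi_adm commD_S)) _.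
by apply: leq_trans (commD_size psi_adm _ commD_Sinv) _; rewrite size_poly1.
Qed.

Lemma transfer_root n : (0 < n)%N -> (transfer n).[0] = 0.
Proof. by move=> n_gt0; rewrite transfer_xhat // hornerZ horner_xhat0 mulr0. Qed.

(* ... and these relations determine a sequence, since Q is injective on
   polynomials vanishing at 0. *)
Lemma Q_kernel r : Q r = 0 -> r.[0] = 0 -> r = 0.
Proof.
rewrite QE => /eqP; rewrite -size_poly_eq0 size_dpsi // => size_Sr r0_0.
have size_r : (size r <= 1)%N.
  rewrite -(SK r); apply: leq_trans (commD_size psi_adm _ commD_Sinv) _.
  by move: size_Sr; case: (size (S r)) => [|[]].
by rewrite (size1_polyC size_r) -horner_coef0 r0_0.
Qed.

Lemma basic_seq_transfer p : basic_seq psi Q p -> forall n, p n = transfer n.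
Proof.
case=> _ p0 p_root Qp; elim=> [|n IH]; first by rewrite p0 transfer0.
apply/eqP; rewrite -subr_eq0; apply/eqP; apply: Q_kernel.
  by rewrite (linB commD_Q.1) Qp Q_transfer IH subrr.
by rewrite hornerD hornerN p_root // transfer_root // subrr.
Qed.

(* Invertibility of Q': if Q x = c is a nonzero constant, then Q' = c0 + W
   with c0 = c / 1_psi and W a degree-lowering operator, so Q' is inverted by
   a Neumann series. *)
Section PincherleInverse.
Variable c : F.
Hypotheses (c_neq0 : c != 0) (QX : Q 'X = c%:P).

Let c0 := (npsi psi 1)^-1 * c.

Lemma pincherle_Q1 : P Q 1 = c0%:P.
Proof.
rewrite /pincherle -[1](expr0 'X) xhatXn expr1 (linZ commD_Q.1) QX QE.
rewrite [D (S _)]dpsi_const ?(lin0 (xhat_linear psi)) ?subr0 ?scale_polyC ?div1r //.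
by apply: leq_trans (commD_size psi_adm _ commD_S) _; rewrite expr0 size_poly1.
Qed.

Definition pincherle_Q_tail q := P Q q - c0 *: q.

Lemma commD_pincherle_Q_tail : commD psi pincherle_Q_tail.
Proof. exact: commD_sub_scale commD_pincherle_Q. Qed.

(* The tail kills constants, hence lowers degrees. *)
Lemma size_pincherle_Q_tail q : (size (pincherle_Q_tail q) <= (size q).-1)%N.
Proof.
have [lW _] := commD_pincherle_Q_tail.
apply: (commD_size_le psi_adm commD_pincherle_Q_tail).
have : (size (iter (size q).-1 D q) <= 1)%N.
  by rewrite size_iter_dpsi // leq_subLR -addn1 addnC -leq_subLR subn1.
move/size1_polyC => ->; rewrite -alg_polyC (linZ lW).
by rewrite /pincherle_Q_tail pincherle_Q1 -alg_polyC subrr scaler0.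
Qed.

Definition pincherle_Q_inv := neumann_inv pincherle_Q_tail c0.

Lemma pincherle_Q_neumann q : P Q q = neumann_op pincherle_Q_tail c0 q.
Proof. by rewrite /neumann_op addrC subrK. Qed.

Lemma c0_neq0 : c0 != 0.
Proof. by rewrite mulf_neq0 ?invr_eq0 ?npsi_neq0. Qed.

Lemma pincherle_QK : cancel (P Q) pincherle_Q_inv.
Proof.
move=> q; rewrite pincherle_Q_neumann.
exact: (neumann_opK commD_pincherle_Q_tail.1 c0_neq0 size_pincherle_Q_tail).
Qed.

Lemma pincherle_Q_invK : cancel pincherle_Q_inv (P Q).
Proof.
move=> q; rewrite pincherle_Q_neumann.
exact: (neumann_invK commD_pincherle_Q_tail.1 c0_neq0 size_pincherle_Q_tail).
Qed.

End PincherleInverse.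

End DeltaOperator.

Theorem theorem2p1 (F : fieldType) (charF0 : [pchar F] =i pred0)
    (psi : nat -> F) (Q S Sinv : {poly F} -> {poly F}) (p : nat -> {poly F}) :
  admissible psi ->
  delta_op psi Q ->
  basic_seq psi Q p ->
  Sigma_psi psi S ->
  cancel S Sinv -> cancel Sinv S ->
  (forall q, Q q = dpsi psi (S q)) ->
  (forall n : nat, (0 < n)%N ->
     [/\ p n = pincherle psi Q (iter n.+1 Sinv ('X ^+ n)),
         p n = iter n Sinv ('X ^+ n)
               - (npsi psi n / n%:R) *: pincherle psi (iter n Sinv) ('X ^+ n.-1)
       & p n = (npsi psi n / n%:R) *: xhat psi (iter n Sinv ('X ^+ n.-1))])
  /\
  (exists Qinv : {poly F} -> {poly F},
     [/\ cancel (pincherle psi Q) Qinv, cancel Qinv (pincherle psi Q)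
       & forall n : nat, (0 < n)%N ->
           p n = (npsi psi n / n%:R) *: xhat psi (Qinv (p n.-1))]).
Proof.
move=> psi_adm [_ [c [c_neq0 QX]]] p_basic S_sigma SK KS QE.
have p_transfer := basic_seq_transfer psi_adm charF0 S_sigma SK KS QE p_basic.
have part3 n : (0 < n)%N ->
    p n = (npsi psi n / n%:R) *: xhat psi (iter n Sinv 'X^(n.-1)).
  by move=> n_gt0; rewrite p_transfer (transfer_xhat_Sinv psi_adm charF0 S_sigma SK KS QE).
have Q'K := pincherle_QK psi_adm charF0 S_sigma QE c_neq0 QX.
split=> [n n_gt0|].
  split; [exact: p_transfer | | exact: part3].
  by rewrite (Sinv_pincherle_form psi_adm charF0 S_sigma SK KS) // part3.
exists (pincherle_Q_inv psi Q c); split.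
- exact: Q'K.
- exact: (pincherle_Q_invK psi_adm charF0 S_sigma QE c_neq0 QX).
- by move=> n n_gt0; rewrite part3 // p_transfer /transfer (prednK n_gt0) Q'K.
Qed.
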